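(* Let $\mu\in\mathbb{C}$ and let $\{S_n(z)\}_{n\ge -1}$ be a sequence of rational functions in $z$ satisfying $S_{-1}=S_0=1$ and the recurrence $$S_{n+1}S_{n-1}=-z\left[S_n\frac{d^2S_n}{dz^2}-\left(\frac{dS_n}{dz}\right)^2\right]-S_n\frac{dS_n}{dz}+(z+\mu)S_n^2,\qquad n\ge 0,$$ and suppose that the nonzero roots of each $S_n$ are simple. Then for every $N\in\mathbb{N}\cup\{0\}$, if $z=0$ is not a root of any $S_n(z)$ with $0\le n\le N$, the following hold: (a) $S_{N+1}(z)$ is a polynomial of degree $\tfrac12(N+1)(N+2)$; (b) $S_{N+1}(z)$ and $S_N(z)$ have no common root.
   Context: The functions $S_n(z)=S_n(z;\mu)$ (Umemura polynomials associated with the third Painlevé equation) are defined by the recurrence in the claim, each $S_{n+1}$ being a priori the rational function obtained by dividing the right-hand side by $S_{n-1}$. *)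

From mathcomp Require Import all_boot all_algebra fraction.
From mathcomp Require Import complex.
From mathcomp Require Import reals Rstruct.
Set Implicit Arguments. Unset Strict Implicit. Unset Printing Implicit Defensive.
Import GRing.Theory.
Local Open Scope ring_scope.

Definition C : numClosedFieldType := complex Rdefinitions.R.

Definition ratfun : fieldType := {fraction {poly C}}.

Definition zF : ratfun := tofrac 'X.

Definition constF (c : C) : ratfun := tofrac (c%:P).

(* d/dz of a rational function f = n/d : (n' d - n d') / d^2, computed on the
   canonical representative of f (the result does not depend on it). *)
Definition ratderiv (f : ratfun) : ratfun :=
  let r := repr f in
  tofrac ((\n_r)^`() * \d_r - \n_r * (\d_r)^`()) / tofrac ((\d_r) ^+ 2).

Definition ratroot (f : ratfun) (z : C) : Prop :=
  exists p q : {poly C},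
    [/\ q != 0, coprimep p q, f = tofrac p / tofrac q & root p z].

Definition nonzero_roots_simple (f : ratfun) : Prop :=
  forall (p q : {poly C}) (z : C),
    q != 0 -> coprimep p q -> f = tofrac p / tofrac q ->
    z != 0 -> root p z -> ~~ root p^`() z.

Definition is_poly_of_degree (f : ratfun) (d : nat) : Prop :=
  exists p : {poly C}, f = tofrac p /\ size p = d.+1.

(** The right-hand side of the recurrence is
    [Phi u = -z (u u'' - u'^2) - u u' + (z + mu) u^2], and
    [Phi u / u^2 = -z (log u)'' - (log u)' + z + mu] gives
    [Phi (g h) = h^2 Phi g + g^2 Phi h - (z + mu) (g h)^2]; moreover a direct
    computation shows [Phi (Phi f) = -(z + mu) (Phi f)^2] at every zero of [f].
    Inductively, [S_(n+1) S_(n-1) = Phi S_n] with polynomials [S_(n-1)], [S_n],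
    [S_(n+1)], consecutive ones without common zeros.  At a zero [a] of [S_n],
    evaluating the product formula for [g h = S_(n+1) S_(n-1) = Phi S_n] gives
    [S_(n-1)(a)^2 Phi S_(n+1) (a) = 0], so [Phi S_(n+1) (a) = 0]; as the zeros
    of [S_n] are simple, [S_n] divides [Phi S_(n+1)] and [S_(n+2)] is a
    polynomial.  A common zero [a] of [S_(n+1)] and [S_(n+2)] would give
    [Phi S_(n+1) (a) = a S_(n+1)'(a)^2 = 0], impossible for a simple zero
    [a <> 0].  Finally [deg Phi u = 2 deg u + 1] yields the degrees. *)

From mathcomp Require Import all_boot all_algebra fraction.
From mathcomp Require Import complex.
From mathcomp Require Import reals Rstruct.
From mathcomp Require Import separable ring zify generic_quotient.
Set Implicit Arguments. Unset Strict Implicit. Unset Printing Implicit Defensive.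
Import GRing.Theory.
Local Open Scope ring_scope.

Section PhiComRing.
Variables (R : comNzRingType) (mu : R).
Implicit Types (f g h : {poly R}) (a : R).

Definition Phi f : {poly R} :=
  - 'X * (f * f^`()^`() - f^`() ^+ 2) - f * f^`() + ('X + mu%:P) * f ^+ 2.

Lemma horner_Phi f a :
  (Phi f).[a] = - a * (f.[a] * f^`()^`().[a] - f^`().[a] ^+ 2)
                - f.[a] * f^`().[a] + (a + mu) * f.[a] ^+ 2.
Proof. by rewrite /Phi !hornerE. Qed.

Lemma Phi1 : Phi 1 = 'X + mu%:P.
Proof. by rewrite /Phi derivC deriv0 expr1n; ring. Qed.

Lemma horner_Phi_root f a : root f a -> (Phi f).[a] = a * f^`().[a] ^+ 2.
Proof. by move/eqP=> fa; rewrite horner_Phi fa; ring. Qed.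

Lemma Phi_mul g h :
  Phi (g * h) = h ^+ 2 * Phi g + g ^+ 2 * Phi h - ('X + mu%:P) * (g * h) ^+ 2.
Proof. by rewrite /Phi !derivE; ring. Qed.

Lemma horner_Phi_Phi f a :
  root f a -> (Phi (Phi f)).[a] = - (a + mu) * (Phi f).[a] ^+ 2.
Proof.
move/eqP=> fa; rewrite [LHS]horner_Phi /Phi !derivE.
by rewrite !(hornerD, hornerN, hornerM, hornerX, hornerC, horner_exp) fa; ring.
Qed.

End PhiComRing.

Section PhiDomain.
Variables (R : idomainType) (mu : R).
Implicit Types (f g h G : {poly R}) (a : R).

Lemma root_Phi_cofactor f g h a : g * h = Phi mu f -> root f a -> ~~ root h a ->
  root (Phi mu h) a -> root (Phi mu g) a.
Proof.
move=> Egh fa ha; rewrite /root in ha *.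
have := congr1 (horner^~ a) (Phi_mul mu g h); rewrite Egh horner_Phi_Phi //=.
(* Generalizing the [Phi] terms keeps the [horner] rewrites from unfolding them. *)
move: (Phi mu f) (Phi mu g) (Phi mu h) => Pf Pg Ph E /eqP Pha.
have key : h.[a] ^+ 2 * Pg.[a] = 0.
  move: E; rewrite !(hornerD, hornerN, hornerM, hornerX, hornerC, horner_exp) Pha.
  by move=> E; apply: (addIr (- (a + mu) * Pf.[a] ^+ 2)); rewrite add0r {2}E; ring.
by move/eqP: key; rewrite mulf_eq0 expf_eq0 (negbTE ha) andbF.
Qed.

Lemma size_deriv_leq (p : {poly R}) : (size p^`() <= (size p).-1)%N.
Proof.
have [->|p_neq0] := eqVneq p 0; first by rewrite deriv0 size_poly0.
by rewrite -ltnS prednK ?lt_size_deriv // size_poly_gt0.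
Qed.

Lemma size_Phi g : g != 0 -> size (Phi mu g) = (2 * size g)%N.
Proof.
move=> g_neq0; have n_gt0 : (0 < size g)%N by rewrite size_poly_gt0.
have XaddC_neq0 : 'X + mu%:P != 0 by rewrite -size_poly_gt0 size_XaddC.
have size_top : size (('X + mu%:P) * g ^+ 2) = (2 * size g)%N.
  by rewrite size_mul ?expf_neq0 // size_XaddC expr2 size_mul //; lia.
rewrite /Phi addrC size_polyDl size_top //.
have d1 := size_deriv_leq g; have d2 := size_deriv_leq g^`().
apply: leq_ltn_trans (size_polyD _ _) _; rewrite size_polyN gtn_max.
apply/andP; split.
  have size_NX : size (- 'X : {poly R}) = 2%N by rewrite size_polyN size_polyX.
  apply: leq_ltn_trans (size_polyMleq _ _) _; rewrite size_NX.
  have := size_polyD (g * g^`()^`()) (- g^`() ^+ 2); rewrite size_polyN !expr2.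
  have := size_polyMleq g g^`()^`(); have := size_polyMleq g^`() g^`().
  (* The products in [Phi] carry the [comNzRingType] instance of [{poly R}] and
     those in the bounds the [idomainType] one: generalizing the sizes
     identifies them for [lia]. *)
  move: (size (g * g^`()^`() - g^`() * g^`())) => D.
  move: (size (g * g^`()^`())) (size (g^`() * g^`())) => A B.
  lia.
have := size_polyMleq g g^`(); move: (size (g * g^`())) => E; lia.
Qed.

Lemma Phi_coprime_next f g G : ~~ root g 0 ->
  (forall a, root g a -> ~~ root g^`() a) -> G * f = Phi mu g ->
  forall a, root g a -> ~~ root G a.
Proof.
move=> g0 simple_g EG a ga; apply: contraNN (simple_g a ga) => Ga.
have /eqP := horner_Phi_root mu ga; rewrite -EG hornerM (eqP Ga) mul0r eq_sym.
rewrite mulf_eq0 expf_eq0 /= => /orP[/eqP a0|] //.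
by move: g0; rewrite -a0 ga.
Qed.

Lemma size_Phi_next n f g G :
  size f = 'C(n, 2).+1 -> size g = 'C(n.+1, 2).+1 -> G * f = Phi mu g ->
  size G = 'C(n.+2, 2).+1.
Proof.
move=> sf sg EG.
have g_neq0 : g != 0 by rewrite -size_poly_gt0 sg.
have := size_Phi g_neq0; rewrite -EG.
have [->|G_neq0] := eqVneq G 0; first by rewrite mul0r size_poly0 sg.
rewrite size_mul //; last by rewrite -size_poly_gt0 sf.
by rewrite sf sg !binS !bin1 bin0; lia.
Qed.

End PhiDomain.

Section ClosedField.
Variable F : closedFieldType.
Implicit Types p q : {poly F}.

Lemma simple_roots_separable p :
  (forall x, root p x -> ~~ root p^`() x) -> separable_poly p.
Proof. by move=> simple_p; rewrite unlock; apply: Pdiv.ClosedField.root_coprimep. Qed.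

Lemma separable_roots_dvdp p q :
  separable_poly p -> (forall x, root p x -> root q x) -> p %| q.
Proof.
move=> sep_p pq; have p_neq0 := separable_poly_neq0 sep_p.
have [r Dp] := closed_field_poly_normal p.
have lc_neq0 : lead_coef p != 0 by rewrite lead_coef_eq0.
have uniq_r : uniq r.
  by rewrite -separable_prod_XsubC -(eqp_separable (eqp_scale _ lc_neq0)) -Dp.
have r_roots : all (root q) r.
  by apply/allP => z z_r; apply: pq; rewrite Dp rootZ // root_prod_XsubC.
have [|s ->] := uniq_roots_prod_XsubC r_roots; first by rewrite uniq_rootsE.
by rewrite Dp dvdpZl // dvdp_mull.
Qed.

Lemma Phi_dvdp_next (mu : F) (h f g : {poly F}) :
  (forall a, root f a -> ~~ root f^`() a) -> (forall a, root h a -> ~~ root f a) ->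
  f %| Phi mu h -> g * h = Phi mu f -> f %| Phi mu g.
Proof.
move=> simple_f coprime_hf f_Phih Egh.
apply: separable_roots_dvdp => [|a fa]; first exact: simple_roots_separable.
apply: (root_Phi_cofactor Egh fa); last exact: root_dvdp f_Phih fa.
by apply: contraL fa; apply: coprime_hf.
Qed.

End ClosedField.

Definition ratPhi (mu : C) (x : ratfun) : ratfun :=
  - zF * (x * ratderiv (ratderiv x) - ratderiv x ^+ 2)
  - x * ratderiv x + (zF + constF mu) * x ^+ 2.

Lemma ratderiv_tofrac (p : {poly C}) : ratderiv (tofrac p) = tofrac p^`().
Proof.
rewrite /ratderiv; have -> : tofrac p = (\pi_ratfun)%qT (Ratio p 1) by unlock tofrac.
have := FracField.equivf_l (Ratio p 1); rewrite !numden_Ratio ?oner_neq0 // mulr1.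
set r := repr _ => num_r; have den_neq0 : \d_r != 0 by [].
rewrite num_r derivM; apply/eqP.
rewrite -[tofrac p^`()]divr1 eqr_div ?tofrac_eq0 ?expf_neq0 ?oner_neq0 //.
by rewrite mulr1 -!tofracM tofrac_eq; apply/eqP; ring.
Qed.

Lemma ratPhi_tofrac mu (p : {poly C}) : ratPhi mu (tofrac p) = tofrac (Phi mu p).
Proof.
rewrite /ratPhi /Phi !ratderiv_tofrac /zF /constF.
by rewrite !(rmorphB, rmorphD, rmorphM, rmorphN, rmorphXn).
Qed.

Lemma ratroot_tofrac (p : {poly C}) z : ratroot (tofrac p) z <-> root p z.
Proof.
split=> [[p0 [q [q_neq0 cop Ep p0z]]] | pz]; last first.
  by exists p, 1; rewrite oner_neq0 coprimep1 rmorph1 divr1.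
have Ep0 : p0 = p * q.
  by apply/eqP; rewrite -tofrac_eq rmorphM /= Ep divfK // tofrac_eq0.
move: p0z; rewrite Ep0 rootM => /orP[] // qz.
have := coprimep_root cop (_ : root p0 z).
by rewrite Ep0 rootM qz orbT (eqP qz) eqxx => /(_ isT).
Qed.

Lemma nonzero_roots_simple_tofrac (p : {poly C}) z :
  nonzero_roots_simple (tofrac p) -> z != 0 -> root p z -> ~~ root p^`() z.
Proof.
by move=> simple_p; apply: (simple_p p 1); rewrite ?oner_neq0 ?coprimep1 ?rmorph1 ?divr1.
Qed.

Section UmemuraSequence.
(* [T n] stands for [S_(n-1)]. *)
Variables (mu : C) (T : nat -> ratfun) (N : nat).
Hypothesis T0 : T 0 = 1.
Hypothesis T1 : T 1 = 1.
Hypothesis T_rec : forall n, T n.+2 * T n = ratPhi mu (T n.+1).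
Hypothesis T_simple : forall n, nonzero_roots_simple (T n).
Hypothesis T_root0 : forall n, (0 < n <= N.+1)%N -> ~ ratroot (T n) 0.

Definition umemura_triple n := exists h f g : {poly C},
  [/\ T n.-1 = tofrac h, T n = tofrac f, T n.+1 = tofrac g,
      size f = 'C(n, 2).+1 & size g = 'C(n.+1, 2).+1] /\
  [/\ g * h = Phi mu f, f %| Phi mu h,
      forall a, root h a -> ~~ root f a & forall a, root f a -> ~~ root g a].

Lemma T_nonroot0 n f : (0 < n <= N.+1)%N -> T n = tofrac f -> ~~ root f 0.
Proof. by move=> n_range Tn; apply/negP; rewrite -ratroot_tofrac -Tn; apply: T_root0. Qed.

Lemma T_simple_roots n f : (0 < n <= N.+1)%N -> T n = tofrac f ->
  forall a, root f a -> ~~ root f^`() a.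
Proof.
move=> n_range Tn a fa; have := @T_simple n; rewrite Tn.
move/nonzero_roots_simple_tofrac; apply=> //.
by apply: contraNneq (T_nonroot0 n_range Tn) => <-.
Qed.

Lemma T_tofrac_next n f g G : T n = tofrac f -> T n.+1 = tofrac g -> f != 0 ->
  G * f = Phi mu g -> T n.+2 = tofrac G.
Proof.
move=> Tn Tn1 f_neq0 EG; have tf_neq0 : tofrac f != 0 by rewrite tofrac_eq0.
apply: (mulIf tf_neq0).
by rewrite -{1}Tn T_rec Tn1 ratPhi_tofrac -EG tofracM.
Qed.

Lemma umemura_triple1 : umemura_triple 1.
Proof.
have T2 : T 2 = tofrac ('X + mu%:P).
  by apply: (T_tofrac_next (f := 1) (g := 1)); rewrite ?T0 ?T1 ?rmorph1 ?oner_neq0 ?mulr1 ?Phi1.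
exists 1, 1, ('X + mu%:P); split; split; rewrite ?T0 ?T1 ?rmorph1 ?size_poly1 ?size_XaddC //.
- by rewrite mulr1 Phi1.
- exact: dvd1p.
- by move=> a _; apply: root1.
- by move=> a; rewrite (negbTE (root1 a)).
Qed.

Lemma umemura_triple_next n : (0 < n <= N)%N -> umemura_triple n -> umemura_triple n.+1.
Proof.
move=> n_range [h [f [g [[Th Tf Tg sf sg] [Egh f_Phih coprime_hf coprime_fg]]]]].
have f_range : (0 < n <= N.+1)%N by lia.
have g_range : (0 < n.+1 <= N.+1)%N by lia.
have f_neq0 : f != 0 by rewrite -size_poly_gt0 sf.
have /dvdpP[G EG] : f %| Phi mu g.
  exact: Phi_dvdp_next (T_simple_roots f_range Tf) coprime_hf f_Phih Egh.
exists f, g, G; split; split => //.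
- exact: T_tofrac_next Tf Tg f_neq0 (esym EG).
- exact: size_Phi_next sf sg (esym EG).
- by rewrite -Egh dvdp_mulIl.
- exact: Phi_coprime_next (T_nonroot0 g_range Tg) (T_simple_roots g_range Tg) (esym EG).
Qed.

Lemma umemura_triple_le m : (m <= N)%N -> umemura_triple m.+1.
Proof.
elim: m => [_|m IH m_le]; first exact: umemura_triple1.
by apply: umemura_triple_next; [lia | apply: IH; lia].
Qed.

End UmemuraSequence.

Theorem theorem3p2 (mu : C) (S : int -> ratfun)
  (HSm1 : S (-1) = 1) (HS0 : S 0 = 1)
  (Srec : forall n : nat,
     S (n%:Z + 1) * S (n%:Z - 1) =
       - zF * (S n * ratderiv (ratderiv (S n)) - (ratderiv (S n)) ^+ 2)
       - S n * ratderiv (S n) + (zF + constF mu) * (S n) ^+ 2)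
  (Ssimple : forall n : int, (-1 <= n)%R -> nonzero_roots_simple (S n))
  (N : nat)
  (H0 : forall n : nat, (n <= N)%N -> ~ ratroot (S n) 0) :
  is_poly_of_degree (S (N%:Z + 1)) (((N.+1) * (N.+2)) %/ 2)%N /\
  ~ (exists z : C, ratroot (S (N%:Z + 1)) z /\ ratroot (S N) z).
Proof.
pose T (m : nat) := S (m%:Z - 1).
have TS m : T m.+1 = S m by rewrite /T; congr S; lia.
have TSS m : T m.+2 = S (m%:Z + 1) by rewrite /T; congr S; lia.
have T0 : T 0 = 1 by rewrite /T sub0r; exact: HSm1.
have T1 : T 1 = 1 by rewrite TS; exact: HS0.
have T_rec m : T m.+2 * T m = ratPhi mu (T m.+1) by rewrite TSS TS; exact: Srec.
have T_simple m : nonzero_roots_simple (T m) by apply: Ssimple; lia.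
have T_root0 m : (0 < m <= N.+1)%N -> ~ ratroot (T m) 0.
  by case: m => // m /andP[_ m_le]; rewrite TS; apply: H0.
have [h [f [g [[_ Tf Tg _ sg] [_ _ _ coprime_fg]]]]] :=
  umemura_triple_le T0 T1 T_rec T_simple T_root0 (leqnn N).
rewrite -TSS -[S N]TS Tg Tf; split.
  by exists g; rewrite sg bin2 -divn2 mulnC.
by move=> [z [/ratroot_tofrac gz /ratroot_tofrac fz]]; move: (coprime_fg z fz); rewrite gz.
Qed.
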